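(* Let $S$ be an additively reduced semidomain and $G$ a torsion-free abelian group. Let $f=\sum_{i=0}^n s_ix^{g_i}\in S[G]$ with $g_0>g_1>\dots>g_n$ and $s_i\in S\setminus\{0\}$. Then: (1) if $|\operatorname{supp}(f)|\ge2$ and $2g_{n-1}>g_0+g_n$, then $f$ is monolithic; (2) if $|\operatorname{supp}(f)|>3$ and $2g_{n-1}\ge g_0+g_n$, then $f$ is monolithic.
   Context: A semidomain is a subsemiring (containing $0$ and $1$) of an integral domain. $S$ is additively reduced if $0$ is the only invertible element of $(S,+)$. $G$ carries a fixed total order compatible with addition. $S[G]$ is the semidomain of formal finite sums $\sum_{g\in G}s_gx^g$ with polynomial operations; $\operatorname{supp}(f)$ is the set of exponents with nonzero coefficient. A nonzero $f\in S[G]$ is monolithic if whenever $f=pq$ with $p,q\in S[G]$, one of $p,q$ is a monomial $sx^g$. *)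

From HB Require Import structures.
From mathcomp Require Import all_boot all_order all_algebra.
From mathcomp Require Import finmap.
Set Implicit Arguments. Unset Strict Implicit. Unset Printing Implicit Defensive.
Import Order.TTheory GRing.Theory Num.Theory.
Local Open Scope ring_scope.

(* The semidomain S is a subsemiring (closed under 0, 1, +, * ) of an
   integral domain R; an element of the group semiring S[G] is a finitely
   supported function G -> R all of whose values lie in S. *)

Definition add_reduced (R : idomainType) (S : {pred R}) : Prop :=
  forall x y, x \in S -> y \in S -> x + y = 0 -> x = 0.

Definition total_compatible_order (G : porderZmodType) : Prop :=
  (forall x y : G, (x <= y) || (y <= x)) /\
  (forall x y z : G, x <= y -> x + z <= y + z).

Definition torsion_free (G : zmodType) : Prop :=
  forall (k : nat) (x : G), x *+ k.+1 = 0 -> x = 0.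

Definition in_SG (R : idomainType) (S : {pred R}) (G : choiceType)
  (p : {fsfun G -> R with 0}) : Prop := forall g, p g \in S.

(* coefficient of x^g in the product p * q (convolution) *)
Definition gmul (R : idomainType) (G : zmodType)
  (p q : {fsfun G -> R with 0}) (g : G) : R :=
  \sum_(h <- finsupp p) p h * q (g - h).

Definition is_monomial (R : idomainType) (G : choiceType)
  (p : {fsfun G -> R with 0}) : Prop :=
  exists (s : R) (g0 : G), forall g, p g = if g == g0 then s else 0.

Definition monolithic (R : idomainType) (S : {pred R}) (G : zmodType)
  (f : {fsfun G -> R with 0}) : Prop :=
  in_SG S f /\ (exists g, f g != 0) /\
  forall p q : {fsfun G -> R with 0}, in_SG S p -> in_SG S q ->
    (forall g, f g = gmul p q g) -> is_monomial p \/ is_monomial q.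

From HB Require Import structures.
From mathcomp Require Import all_boot all_order all_algebra.
From mathcomp Require Import finmap zify.
From Stdlib Require Import Classical.
Set Implicit Arguments.
Unset Strict Implicit.
Import Order.TTheory GRing.Theory Num.Theory.
Local Open Scope ring_scope.

(* Suppose f = p q with neither factor a monomial.  Since S is additively
   reduced and R is a domain, no cancellation occurs in the product, so every
   sum of a support point of p and one of q is some g_i, and every g_i is such
   a sum.  Hence g_0 = a_0 + b_0 and g_n = a_m + b_k, where a_0 > a_m are the
   largest and smallest support points of p, and b_0 > b_k those of q.  The
   corner sums a_0 + b_k and a_m + b_0 differ from g_n, so both are at least
   g_(n-1); as they add up to g_0 + g_n, we get 2 g_(n-1) <= g_0 + g_n.
   If equality held, both corners would equal g_(n-1); then every support
   point of p is a_m or a_0 and every one of q is b_k or b_0, so g_1 would be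
   one of g_n, g_(n-1), g_0, impossible once n >= 3. *)

Section SemidomainConvolution.
Variables (R : idomainType) (S : semiringClosed R).
Hypothesis S_reduced : add_reduced S.

Lemma add_reduced_sum_eq0 (I : eqType) (r : seq I) (F : I -> R) :
  \sum_(i <- r) F i = 0 -> (forall i, F i \in S) ->
  forall i, i \in r -> F i = 0.
Proof.
move=> + FS; elim: r => [|j r IHr] //; rewrite big_cons => sum_eq0.
have Fj0 : F j = 0 by apply: S_reduced sum_eq0 => //; apply: rpred_sum.
move: sum_eq0; rewrite Fj0 add0r => /IHr {}IHr i.
by rewrite in_cons => /predU1P[->|/IHr].
Qed.

Variable G : zmodType.

Lemma gmul_neq0 (p q : {fsfun G -> R with 0}) a b :
  in_SG S p -> in_SG S q -> p a != 0 -> q b != 0 -> gmul p q (a + b) != 0.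
Proof.
move=> Sp Sq pa0 qb0; apply/eqP.
move=> /add_reduced_sum_eq0 /(_ (fun h => rpredM (Sp h) (Sq _)) a).
rewrite mem_finsupp [a + b]addrC addrK => /(_ pa0) /eqP.
by rewrite mulf_eq0 (negbTE pa0) (negbTE qb0).
Qed.

End SemidomainConvolution.

Lemma gmul_neq0_split (R : idomainType) (G : zmodType)
  (p q : {fsfun G -> R with 0}) c :
  gmul p q c != 0 -> exists a b, [/\ p a != 0, q b != 0 & a + b = c].
Proof.
pose nz a := p a * q (c - a) != 0.
rewrite /gmul; have [/hasP[a _]|/hasPn all0] := boolP (has nz (finsupp p)).
  rewrite /nz mulf_eq0 negb_or => /andP[pa0 qb0].
  by exists a, (c - a); rewrite subrKC.
by rewrite big1_seq ?eqxx // => a /andP[_ /all0]; rewrite negbK => /eqP.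
Qed.

Lemma non_monomial_two_supp (R : idomainType) (G : zmodType)
  (p : {fsfun G -> R with 0}) :
  ~ is_monomial p -> exists a a', [/\ p a != 0, p a' != 0 & a != a'].
Proof.
have supp_avoid a : ~ is_monomial p -> exists2 a', p a' != 0 & a' != a.
  move=> nonmono; apply: NNPP => no_other; apply: nonmono.
  exists (p a), a => x; case: eqVneq => [-> //|xa].
  by apply/eqP/contraT => px0; case: no_other; exists x.
move=> nonmono; have [a pa0 _] := supp_avoid 0 nonmono.
by have [a' pa'0 a'a] := supp_avoid a nonmono; exists a', a.
Qed.

Lemma monolithic_intro (R : idomainType) (S : {pred R}) (G : zmodType)
  (f : {fsfun G -> R with 0}) :
  in_SG S f -> (exists x, f x != 0) ->
  (forall p q, in_SG S p -> in_SG S q -> (forall x, f x = gmul p q x) ->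
     ~ is_monomial p -> ~ is_monomial q -> False) ->
  monolithic S f.
Proof.
move=> Sf f_neq0 no_factor; split=> //; split=> // p q Sp Sq fpq.
have [|] := classic (is_monomial p); first by left.
have [|] := classic (is_monomial q); first by right.
by move/(no_factor p q Sp Sq fpq).
Qed.

Section CompatibleOrder.
Variable G : porderZmodType.
Hypothesis add_monotone : forall x y z : G, x <= y -> x + z <= y + z.

Lemma leD2r (x y z : G) : (x + z <= y + z) = (x <= y).
Proof.
apply/idP/idP => [/(add_monotone (- z))|/add_monotone //].
by rewrite !addrK.
Qed.

Lemma leD2l (x y z : G) : (z + x <= z + y) = (x <= y).
Proof. by rewrite ![z + _]addrC leD2r. Qed.

Lemma leD (x y z t : G) : x <= y -> z <= t -> x + z <= y + t.
Proof.
by move=> xy zt; apply: (@le_trans _ _ (y + z)); rewrite ?leD2r ?leD2l.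
Qed.

Lemma ge_sum_eq (x y z : G) : z <= x -> z <= y -> x + y = z + z -> x = z.
Proof.
move=> zx zy xyzz; apply: le_anti; rewrite zx andbT.
by rewrite -(leD2r _ _ y) xyzz leD2l.
Qed.

End CompatibleOrder.

Section DecreasingChain.
Local Open Scope order_scope.
Variables (d : Order.disp_t) (T : porderType d) (n : nat) (g : nat -> T).
Hypothesis g_decr : forall i j, (i < j <= n)%N -> g j < g i.

Lemma chain_le i j : (i <= j <= n)%N -> g j <= g i.
Proof.
case/andP; rewrite leq_eqVlt => /predU1P[-> //|ij jn].
by rewrite ltW // g_decr // ij.
Qed.

Lemma chain_le_pred i : (i <= n)%N -> i != n -> g n.-1 <= g i.
Proof. by move=> ??; apply: chain_le; apply/andP; split; lia. Qed.

Lemma chain_inj i j : (i <= n)%N -> (j <= n)%N -> g i = g j -> i = j.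
Proof.
move=> ilen jlen; case: (ltngtP i j) => [ij|ji|//] gij.
- by have := @g_decr i j; rewrite gij ltxx ij jlen => /(_ isT).
- by have := @g_decr j i; rewrite gij ltxx ji ilen => /(_ isT).
Qed.

End DecreasingChain.

Section SumsetInChain.
Variable G : porderZmodType.
Hypothesis add_monotone : forall x y z : G, x <= y -> x + z <= y + z.
Variables (n : nat) (g : nat -> G).
Hypothesis g_decr : forall i j, (i < j <= n)%N -> g j < g i.
Variables (P Q : pred G).
Hypothesis sum_in_chain :
  forall a b, P a -> Q b -> exists2 i, (i <= n)%N & a + b = g i.
Hypothesis chain_in_sum :
  forall i, (i <= n)%N -> exists a b, [/\ P a, Q b & a + b = g i].
Hypothesis P_two : exists a a', [/\ P a, P a' & a != a'].
Hypothesis Q_two : exists b b', [/\ Q b, Q b' & b != b'].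

Section Extremes.
Variables (a0 b0 am bk : G).
Hypotheses (Pa0 : P a0) (Qb0 : Q b0) (Pam : P am) (Qbk : Q bk).
Hypotheses (top : a0 + b0 = g 0%N) (bot : am + bk = g n).

Lemma le_top_l a : P a -> a <= a0.
Proof.
move=> Pa; rewrite -(leD2r add_monotone _ _ b0) top.
by have [i ilen ->] := sum_in_chain Pa Qb0; apply: (chain_le g_decr).
Qed.

Lemma le_top_r b : Q b -> b <= b0.
Proof.
move=> Qb; rewrite -(leD2l add_monotone _ _ a0) top.
by have [i ilen ->] := sum_in_chain Pa0 Qb; apply: (chain_le g_decr).
Qed.

Lemma ge_bot_l a : P a -> am <= a.
Proof.
move=> Pa; rewrite -(leD2r add_monotone _ _ bk) bot.
have [i ilen ->] := sum_in_chain Pa Qbk.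
by apply: (chain_le g_decr); rewrite ilen leqnn.
Qed.

Lemma ge_bot_r b : Q b -> bk <= b.
Proof.
move=> Qb; rewrite -(leD2l add_monotone _ _ am) bot.
have [i ilen ->] := sum_in_chain Pam Qb.
by apply: (chain_le g_decr); rewrite ilen leqnn.
Qed.

Lemma corner_l a : P a -> a != am -> g n.-1 <= a + bk.
Proof.
move=> Pa a_am; have [i ilen e] := sum_in_chain Pa Qbk; rewrite e.
apply: (chain_le_pred g_decr) => //; apply: contra a_am => /eqP i_n.
by apply/eqP/(addIr bk); rewrite e bot i_n.
Qed.

Lemma corner_r b : Q b -> b != bk -> g n.-1 <= am + b.
Proof.
move=> Qb b_bk; have [i ilen e] := sum_in_chain Pam Qb; rewrite e.
apply: (chain_le_pred g_decr) => //; apply: contra b_bk => /eqP i_n.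
by apply/eqP/(addrI am); rewrite e bot i_n.
Qed.

Lemma corners_sum : (a0 + bk) + (am + b0) = g 0%N + g n.
Proof. by rewrite -top -bot addrACA [bk + _]addrC addrACA. Qed.

Lemma top_neq_bot_l : a0 != am.
Proof.
have [a [a' [Pa Pa' aa']]] := P_two; apply: contraNneq aa' => top_bot.
have eq_am x : P x -> x = am.
  by move=> Px; apply: le_anti; rewrite ge_bot_l // -top_bot le_top_l.
by rewrite (eq_am a) // (eq_am a').
Qed.

Lemma top_neq_bot_r : b0 != bk.
Proof.
have [b [b' [Qb Qb' bb']]] := Q_two; apply: contraNneq bb' => top_bot.
have eq_bk y : Q y -> y = bk.
  by move=> Qy; apply: le_anti; rewrite ge_bot_r // -top_bot le_top_r.
by rewrite (eq_bk b) // (eq_bk b').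
Qed.

Lemma extremes_gap_le : g n.-1 + g n.-1 <= g 0%N + g n.
Proof.
rewrite -corners_sum; apply: (leD add_monotone).
  exact: corner_l top_neq_bot_l.
exact: corner_r top_neq_bot_r.
Qed.

Lemma extremes_gap_lt : (3 <= n)%N -> g n.-1 + g n.-1 < g 0%N + g n.
Proof.
move=> n_ge3; rewrite lt_neqAle extremes_gap_le andbT; apply/eqP => gap_eq.
have corners_eq : (a0 + bk) + (am + b0) = g n.-1 + g n.-1.
  by rewrite corners_sum gap_eq.
have top_bk_ge := corner_l Pa0 top_neq_bot_l.
have am_top_ge := corner_r Qb0 top_neq_bot_r.
have top_bk : a0 + bk = g n.-1 :=
  ge_sum_eq add_monotone top_bk_ge am_top_ge corners_eq.
have am_top : am + b0 = g n.-1.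
  by apply: (ge_sum_eq add_monotone am_top_ge top_bk_ge); rewrite addrC.
have P_ends a : P a -> a = am \/ a = a0.
  move=> Pa; have [->|a_am] := eqVneq a am; [by left | right].
  apply: le_anti; rewrite le_top_l //= -(leD2r add_monotone _ _ bk) top_bk.
  exact: corner_l.
have Q_ends b : Q b -> b = bk \/ b = b0.
  move=> Qb; have [->|b_bk] := eqVneq b bk; [by left | right].
  apply: le_anti; rewrite le_top_r //= -(leD2l add_monotone _ _ am) am_top.
  exact: corner_r.
have [|a1 [b1 [Pa1 Qb1 e1]]] := chain_in_sum (i := 1); first lia.
have g1_fresh j : (j <= n)%N -> j != 1%N -> (g j == g 1%N) = false.
  move=> jlen j1; apply/negbTE; apply: contra_neq j1.
  by apply: (chain_inj g_decr) => //; lia.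
move/eqP: e1; case: (P_ends _ Pa1) => ->; case: (Q_ends _ Qb1) => ->.
- by rewrite bot g1_fresh //; lia.
- by rewrite am_top g1_fresh //; lia.
- by rewrite top_bk g1_fresh //; lia.
- by rewrite top g1_fresh.
Qed.

End Extremes.

Lemma sumset_gap_le : g n.-1 + g n.-1 <= g 0%N + g n.
Proof.
have [a0 [b0 [Pa0 Qb0 top]]] := chain_in_sum (leq0n n).
have [am [bk [Pam Qbk bot]]] := chain_in_sum (leqnn n).
exact: extremes_gap_le top bot.
Qed.

Lemma sumset_gap_lt : (3 <= n)%N -> g n.-1 + g n.-1 < g 0%N + g n.
Proof.
have [a0 [b0 [Pa0 Qb0 top]]] := chain_in_sum (leq0n n).
have [am [bk [Pam Qbk bot]]] := chain_in_sum (leqnn n).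
exact: extremes_gap_lt top bot.
Qed.

End SumsetInChain.

Section ChainSupportedSum.
Variables (R : idomainType) (G : porderZmodType) (n : nat).
Variables (s : nat -> R) (g : nat -> G) (f : {fsfun G -> R with 0}).
Hypothesis g_decr : forall i j, (i < j <= n)%N -> g j < g i.
Hypothesis f_def :
  forall x, f x = \sum_(i < n.+1) (if x == g i then s i else 0).

Lemma chain_sum_at i : (i <= n)%N -> f (g i) = s i.
Proof.
move=> ilen; rewrite (f_def (g i)) (bigD1 (Ordinal (ilen : (i < n.+1)%N))) //=.
rewrite eqxx big1 ?addr0 // => j ji.
have [gij|//] := eqVneq (g i) (g j).
have ij : i = j := chain_inj g_decr ilen (ltnSE (ltn_ord j)) gij.
by case/eqP: ji; apply: val_inj; rewrite /= ij.
Qed.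

Lemma chain_sum_supp x : f x != 0 -> exists2 i, (i <= n)%N & x = g i.
Proof.
rewrite (f_def x).
case: (pickP (fun i : 'I_n.+1 => x == g i)) => [i /eqP ->|none].
  by exists i => //; apply: ltnSE.
by rewrite big1 ?eqxx // => i _; rewrite none.
Qed.

Lemma chain_sum_in_SG (S : semiringClosed R) :
  (forall i, (i <= n)%N -> s i \in S) -> in_SG S f.
Proof.
move=> sS x; rewrite (f_def x); apply: rpred_sum => i _.
by case: ifP => _; [apply/sS/ltnSE | apply: rpred0].
Qed.

End ChainSupportedSum.

Section Factorization.
Variables (R : idomainType) (S : semiringClosed R) (G : porderZmodType).
Variables (n : nat) (s : nat -> R) (g : nat -> G) (f : {fsfun G -> R with 0}).
Hypothesis S_reduced : add_reduced S.
Hypothesis g_decr : forall i j, (i < j <= n)%N -> g j < g i.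
Hypothesis s_neq0 : forall i, (i <= n)%N -> s i != 0.
Hypothesis f_def :
  forall x, f x = \sum_(i < n.+1) (if x == g i then s i else 0).
Variables (p q : {fsfun G -> R with 0}).
Hypotheses (Sp : in_SG S p) (Sq : in_SG S q) (fpq : forall x, f x = gmul p q x).

Lemma supp_mul_chain a b :
  p a != 0 -> q b != 0 -> exists2 i, (i <= n)%N & a + b = g i.
Proof.
move=> pa0 qb0; apply: (chain_sum_supp f_def).
by rewrite fpq (gmul_neq0 S_reduced).
Qed.

Lemma chain_mul_split i :
  (i <= n)%N -> exists a b, [/\ p a != 0, q b != 0 & a + b = g i].
Proof.
move=> ilen; apply: gmul_neq0_split.
by rewrite -fpq (chain_sum_at g_decr f_def) ?s_neq0.
Qed.

End Factorization.

Theorem lemma3p3 (R : idomainType) (S : semiringClosed R)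
  (G : porderZmodType) (n : nat) (s : nat -> R) (g : nat -> G)
  (f : {fsfun G -> R with 0}) :
  add_reduced S ->
  torsion_free G ->
  total_compatible_order G ->
  (forall i j, (i < j <= n)%N -> g j < g i) ->
  (forall i, (i <= n)%N -> s i \in S) ->
  (forall i, (i <= n)%N -> s i != 0) ->
  (forall x, f x = \sum_(i < n.+1) (if x == g i then s i else 0)) ->
  ((1 <= n)%N -> g 0%N + g n < g n.-1 + g n.-1 -> monolithic S f) /\
  ((3 <= n)%N -> g 0%N + g n <= g n.-1 + g n.-1 -> monolithic S f).
Proof.
move=> S_reduced _ [_ add_monotone] g_decr sS s_neq0 f_def.
have f_neq0 : exists x, f x != 0.
  by exists (g 0%N); rewrite (chain_sum_at g_decr f_def) ?s_neq0.
have Sf := chain_sum_in_SG f_def sS.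
split=> [_ ends_lt | n_ge3 ends_le].
all: apply: monolithic_intro => // p q Sp Sq fpq.
all: move=> /non_monomial_two_supp p_two /non_monomial_two_supp q_two.
all: have chain := supp_mul_chain S_reduced f_def Sp Sq fpq.
all: have cover := chain_mul_split g_decr s_neq0 f_def fpq.
- have := sumset_gap_le add_monotone g_decr chain cover p_two q_two.
  by rewrite lt_geF.
- have := sumset_gap_lt add_monotone g_decr chain cover p_two q_two n_ge3.
  by rewrite le_gtF.
Qed.
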